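(* Let $A=(a_{ij})_{1\le i,j\le n}$ be a real Nekrasov matrix with $a_{ii}>0$ for all $i$. Let $k$ be the smallest index such that $a_{kj}=0$ for all $j>k$, and let $\epsilon_1,\dots,\epsilon_n$ be real numbers with $\epsilon_i=0$ for $i<k$ and, for $i=k,\dots,n$, $0<\epsilon_i<a_{ii}-h_i(A)$ and $\epsilon_i>\sum_{j=k}^{i-1}\frac{|a_{ij}|\epsilon_j}{a_{jj}}$. Let $s_i:=\frac{h_i(A)+\epsilon_i}{a_{ii}}$, $w_i:=\sum_{j=1}^{i-1}|a_{ij}|\frac{\epsilon_j}{a_{jj}}$ and $p_i:=\sum_{j=i+1}^{n}|a_{ij}|\frac{a_{jj}-h_j(A)-\epsilon_j}{a_{jj}}$ for $i\in N$. Then $$\max_{d\in[0,1]^n}\|(I-D+DA)^{-1}\|_\infty\le \max\left\{\frac{1}{\min_{i}(\epsilon_i-w_i+p_i)},\ \frac{1}{\min_i s_i}\right\},$$ where for $d=(d_1,\dots,d_n)\in[0,1]^n$, $D=\mathrm{diag}(d_1,\dots,d_n)$ and $I$ is the $n\times n$ identity matrix.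
   Context: For a real $n\times n$ matrix $A=(a_{ij})$ with $a_{ii}\ne 0$ for all $i$, define recursively $h_1(A):=\sum_{j\ne 1}|a_{1j}|$ and $h_i(A):=\sum_{j=1}^{i-1}|a_{ij}|\frac{h_j(A)}{|a_{jj}|}+\sum_{j=i+1}^{n}|a_{ij}|$ for $i=2,\dots,n$. $A$ is a Nekrasov matrix if $|a_{ii}|>h_i(A)$ for all $i\in N=\{1,\dots,n\}$. $\|\cdot\|_\infty$ is the maximum absolute row sum norm. (The matrices $I-D+DA$ are nonsingular for all such $D$.) *)

(* Indices are 0-based: row/column i : 'I_n corresponds to i+1 in the paper. *)
From HB Require Import structures.
From mathcomp Require Import all_boot all_order all_algebra.
Set Implicit Arguments. Unset Strict Implicit. Unset Printing Implicit Defensive.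
Import Order.TTheory GRing.Theory Num.Theory.
Local Open Scope ring_scope.

Section Nekrasov.
Variable R : realFieldType.
Variable n : nat.
Implicit Types (A : 'M[R]_n).

(* h_i(A) given the already computed values prev = [h_0; ...; h_{i-1}] :
   h_i = sum_{j<i} |a_ij| h_j / |a_jj| + sum_{j>i} |a_ij| *)
Definition h_step A (i : 'I_n) (prev : seq R) : R :=
  \sum_(j < n | (j < i)%N) `|A i j| * prev`_j / `|A j j|
  + \sum_(j < n | (i < j)%N) `|A i j|.

Definition h_seq A : seq R :=
  foldl (fun prev i => rcons prev (h_step A i prev)) [::] (enum 'I_n).

Definition nek_h A (i : 'I_n) : R := (h_seq A)`_i.

Definition is_Nekrasov A : Prop :=
  (forall i : 'I_n, A i i != 0) /\ (forall i : 'I_n, nek_h A i < `|A i i|).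

Definition norm_inf (B : 'M[R]_n) : R :=
  \big[Num.max/0]_(i < n) \sum_(j < n) `|B i j|.

End Nekrasov.

Definition min_ord (R : realFieldType) (n : nat) (F : 'I_n.+1 -> R) : R :=
  \big[Num.min/F ord0]_(i < n.+1) F i.

(* With the scaling s_i = (h_i + eps_i)/a_ii in (0,1], the matrix A is
   "s-diagonally dominant": a_ii s_i - sum_{j<>i} |a_ij| s_j = eps_i - w_i + p_i > 0.
   Each row of M = I - D + DA is the convex combination (1 - d_i) e_i + d_i A_i,
   so its s-dominance margin is at least g = min (min_i (eps_i - w_i + p_i), min_i s_i).
   An s-dominant matrix with margin g satisfies |(M y)_{i0}| >= g |y|_oo at the row i0
   maximizing |y_i|/s_i, hence it is invertible and ||M^-1||_oo <= 1/g. *)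
From HB Require Import structures.
From mathcomp Require Import all_boot all_order all_algebra.
Import Order.TTheory GRing.Theory Num.Theory.
From mathcomp Require Import ring lra.

Set Implicit Arguments.
Unset Strict Implicit.
Unset Printing Implicit Defensive.
Local Open Scope ring_scope.

Section FoldlRcons.
Variables (U T : Type) (f : seq U -> T -> U).

Let run (p : seq U) (l : seq T) : seq U :=
  foldl (fun prev x => rcons prev (f prev x)) p l.

Lemma take_foldl_rcons p l : take (size p) (run p l) = p.
Proof.
elim: l p => [|x l IH] p /=; first by rewrite take_size.
by rewrite -(take_takel _ (leqnSn (size p))) -(size_rcons p (f p x)) IH
  -cats1 take_size_cat.
Qed.

Lemma nth_foldl_rcons (u0 : U) (t0 : T) p l j : (j < size l)%N ->
  nth u0 (run p l) (size p + j) =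
  f (take (size p + j) (run p l)) (nth t0 l j).
Proof.
elim: l p j => [|x l IH] p [|j] //= Hj.
- have r_prefix := take_foldl_rcons (rcons p (f p x)) l.
  rewrite size_rcons in r_prefix.
  rewrite addn0 -(nth_take _ (ltnSn _)) r_prefix nth_rcons ltnn eqxx.
  by rewrite -(take_takel _ (leqnSn (size p))) r_prefix -cats1 take_size_cat.
- by rewrite -addSnnS -(size_rcons p (f p x)) IH.
Qed.

End FoldlRcons.

Lemma nek_hE {R : realFieldType} {n : nat} (A : 'M[R]_n) (i : 'I_n) :
  nek_h A i = \sum_(j < n | (j < i)%N) `|A i j| * nek_h A j / `|A j j|
            + \sum_(j < n | (i < j)%N) `|A i j|.
Proof.
have := @nth_foldl_rcons _ _ (fun p i => h_step A i p) 0 i [::] (enum 'I_n) i.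
rewrite size_enum_ord /= => /(_ (ltn_ord i)).
rewrite /nek_h /h_seq => ->; rewrite nth_ord_enum /h_step.
by congr (_ + _); apply: eq_bigr => j Hj; rewrite nth_take.
Qed.

Lemma nek_h_ge0 {R : realFieldType} {n : nat} (A : 'M[R]_n) (i : 'I_n) :
  0 <= nek_h A i.
Proof.
have [N] := ubnP i; elim: N i => // N IH j lt_jN.
rewrite nek_hE addr_ge0 ?sumr_ge0 // => l lt_lj.
by rewrite divr_ge0 // mulr_ge0 // IH // (leq_trans lt_lj).
Qed.

Lemma sum_neq_split {R : realFieldType} {m : nat} (i : 'I_m) (F : 'I_m -> R) :
  \sum_(j < m | j != i) F j
  = \sum_(j < m | (j < i)%N) F j + \sum_(j < m | (i < j)%N) F j.
Proof.
rewrite !(big_mkcond (fun j => _ != _)) !(big_mkcond (fun j => (_ < _)%N)).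
rewrite -big_split; apply: eq_bigr => j _ /=.
by rewrite -(inj_eq val_inj); case: ltngtP; rewrite ?addr0 ?add0r.
Qed.

Definition dominance_margin {R : realFieldType} {m : nat} (M : 'M[R]_m)
    (s : 'I_m -> R) (i : 'I_m) : R :=
  M i i * s i - \sum_(j < m | j != i) `|M i j| * s j.

Section ScaledDominance.
Variables (R : realFieldType) (m : nat) (M : 'M[R]_m.+1) (s : 'I_m.+1 -> R) (g : R).
Hypothesis s01 : forall j, 0 < s j <= 1.
Hypothesis margin_ge : forall i, g <= dominance_margin M s i.

Lemma dominant_mul_ge (y : 'cV[R]_m.+1) : 0 <= g ->
  exists i0, forall i, g * `|y i 0| <= `|(M *m y) i0 0|.
Proof.
move=> g0; pose z i := `|y i 0| / s i.
have [i0 _ z_max] := @arg_maxP _ R _ ord0 predT z isT.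
exists i0 => i.
have s_gt0 j : 0 < s j by case/andP: (s01 j).
have y_le j : `|y j 0| <= s j * z i0.
  by rewrite mulrC -ler_pdivrMr //; exact: z_max.
have z_ge0 : 0 <= z i0 by rewrite divr_ge0 // ltW.
apply: (@le_trans _ _ (g * z i0)).
  rewrite ler_wpM2l // (le_trans (y_le i)) // ler_piMl //.
  by case/andP: (s01 i).
rewrite mxE (bigD1 i0) //= (le_trans _ (lerB_normD _ _)) //.
apply: (@le_trans _ _ (`|M i0 i0 * y i0 0|
           - \sum_(j < m.+1 | j != i0) `|M i0 j| * `|y j 0|)); last first.
  rewrite lerB // (le_trans (ler_norm_sum _ _ _)) //.
  by apply: ler_sum => j _; rewrite normrM.
have y_i0 : `|y i0 0| = s i0 * z i0 by rewrite /z mulrC divfK // gt_eqF.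
apply: (@le_trans _ _ (z i0 * dominance_margin M s i0)).
  by rewrite mulrC ler_wpM2l.
rewrite mulrBr lerB //.
  rewrite normrM y_i0 mulrCA mulrA (mulrC (s i0)) -mulrA ler_wpM2r //.
    by rewrite mulr_ge0 // ltW.
  exact: real_ler_norm (num_real _).
rewrite mulr_sumr ler_sum // => j _.
by rewrite mulrCA ler_wpM2l // mulrC y_le.
Qed.

Hypothesis g_gt0 : 0 < g.

Lemma dominant_unitmx : M \in unitmx.
Proof.
rewrite unitmxE unitfE -det_tr; apply/negP => /det0P [v /negP v_neq0 vM].
apply: v_neq0; apply/eqP/matrixP => i j; rewrite (ord1 i) mxE.
have [i0 Hi0] := dominant_mul_ge v^T (ltW g_gt0).
have Mv0 : M *m v^T = 0 by rewrite -[M]trmxK -trmx_mul vM trmx0.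
have := Hi0 j; rewrite Mv0 !mxE normr0 pmulr_rle0 // normr_le0.
by move/eqP.
Qed.

Lemma sum_invmx_row_le i : \sum_j `|invmx M i j| <= g^-1.
Proof.
pose x : 'cV[R]_m.+1 := \col_j Num.sg (invmx M i j).
have [i0] := dominant_mul_ge (invmx M *m x) (ltW g_gt0).
rewrite mulmxA mulmxV ?dominant_unitmx // mul1mx => /(_ i).
rewrite !mxE (eq_bigr (fun j => `|invmx M i j|)) => [|j _]; last first.
  by rewrite mxE mulrC -normrEsg.
rewrite ger0_norm ?sumr_ge0 // => le_gsum.
rewrite -(ler_pM2l g_gt0) mulfV ?gt_eqF // (le_trans le_gsum) // normr_sg.
by case: (_ != 0).
Qed.

End ScaledDominance.

Lemma norm_inf_le {R : realFieldType} {m : nat} (B : 'M[R]_m) (c : R) :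
  0 <= c -> (forall i, \sum_j `|B i j| <= c) -> norm_inf B <= c.
Proof.
move=> c0 rows; rewrite /norm_inf.
by elim/big_ind: _ => // x y; rewrite ge_max => -> ->.
Qed.

Lemma dominance_margin_interpolate {R : realFieldType} {m : nat}
    (A : 'M[R]_m) (d : 'rV[R]_m) (s : 'I_m -> R) (i : 'I_m) : 0 <= d 0 i ->
  dominance_margin (1%:M - diag_mx d + diag_mx d *m A) s i
  = (1 - d 0 i) * s i + d 0 i * dominance_margin A s i.
Proof.
move=> d_ge0; rewrite /dominance_margin mul_diag_mx.
rewrite (eq_bigr (fun j => d 0 i * (`|A i j| * s j))) => [|j ji]; last first.
  rewrite !mxE eq_sym (negbTE ji) mulr0n subr0 add0r normrM (ger0_norm d_ge0).
  by rewrite mulrA.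
rewrite -mulr_sumr.
by rewrite !mxE eqxx !mulr1n; ring.
Qed.

Lemma min_ord_le {R : realFieldType} {m : nat} (F : 'I_m.+1 -> R) i :
  min_ord F <= F i.
Proof. exact: bigmin_le. Qed.

Lemma min_ord_gt0 {R : realFieldType} {m : nat} (F : 'I_m.+1 -> R) :
  (forall i, 0 < F i) -> 0 < min_ord F.
Proof.
by move=> F_gt0; apply: (big_ind (fun x => 0 < x)) => // x y; rewrite lt_min => ->.
Qed.

Definition nek_s {R : realFieldType} {n : nat} (A : 'M[R]_n) (eps : 'I_n -> R)
    (i : 'I_n) : R :=
  (nek_h A i + eps i) / A i i.

Definition nek_w {R : realFieldType} {n : nat} (A : 'M[R]_n) (eps : 'I_n -> R)
    (i : 'I_n) : R :=
  \sum_(j < n | (j < i)%N) `|A i j| * (eps j / A j j).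

Definition nek_p {R : realFieldType} {n : nat} (A : 'M[R]_n) (eps : 'I_n -> R)
    (i : 'I_n) : R :=
  \sum_(j < n | (i < j)%N) `|A i j| * ((A j j - nek_h A j - eps j) / A j j).

Lemma dominance_margin_nek_s {R : realFieldType} {n : nat} (A : 'M[R]_n)
    (eps : 'I_n -> R) (i : 'I_n) : (forall j, 0 < A j j) ->
  dominance_margin A (nek_s A eps) i = eps i - nek_w A eps i + nek_p A eps i.
Proof.
move=> A_pos; have A_neq0 j : A j j != 0 by rewrite gt_eqF.
rewrite /dominance_margin /nek_s /nek_w /nek_p mulrC divfK // nek_hE sum_neq_split.
set s := fun j => (nek_h A j + eps j) / A j j.
have lower : \sum_(j < n | (j < i)%N) `|A i j| * s j
    = \sum_(j < n | (j < i)%N) `|A i j| * nek_h A j / `|A j j|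
      + \sum_(j < n | (j < i)%N) `|A i j| * (eps j / A j j).
  rewrite -big_split; apply: eq_bigr => j _ /=.
  by rewrite (ger0_norm (ltW (A_pos j))) /s; field.
have upper : \sum_(j < n | (i < j)%N) `|A i j| * s j
    = \sum_(j < n | (i < j)%N) `|A i j|
      - \sum_(j < n | (i < j)%N) `|A i j| * ((A j j - nek_h A j - eps j) / A j j).
  by rewrite -sumrB; apply: eq_bigr => j _; rewrite /s; field.
rewrite lower upper; ring.
Qed.

Section NekrasovScaling.
Variables (R : realFieldType) (n : nat) (A : 'M[R]_n.+1) (k : 'I_n.+1)
  (eps : 'I_n.+1 -> R).
Hypothesis A_nek : is_Nekrasov A.
Hypothesis A_pos : forall i, 0 < A i i.
Hypothesis row_lt_k : forall i : 'I_n.+1, (i < k)%N ->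
  exists j : 'I_n.+1, (i < j)%N /\ A i j != 0.
Hypothesis eps_lt_k : forall i : 'I_n.+1, (i < k)%N -> eps i = 0.
Hypothesis eps_ge_k : forall i : 'I_n.+1, (k <= i)%N ->
  [/\ 0 < eps i, eps i < A i i - nek_h A i &
      \sum_(j < n.+1 | (k <= j < i)%N) `|A i j| * eps j / A j j < eps i].

Lemma eps_bounds j : 0 <= eps j < A j j - nek_h A j.
Proof.
have [Hkj | Hjk] := leqP k j; first by case: (eps_ge_k Hkj) => /ltW -> ->.
rewrite eps_lt_k // lexx subr_gt0 /= -(gtr0_norm (A_pos j)).
by case: A_nek => _; apply.
Qed.

(* For j < k we have eps_j = 0, but row j has a nonzero entry right of the
   diagonal, so h_j > 0. *)
Lemma nek_s_bounds j : 0 < nek_s A eps j <= 1.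
Proof.
have /andP[e0 e_lt] := eps_bounds j.
rewrite /nek_s ler_pdivrMr // mul1r; apply/andP; split; last by lra.
apply: divr_gt0 => //.
have [Hkj | Hjk] := leqP k j.
  by case: (eps_ge_k Hkj) => e_gt0 _ _; have := nek_h_ge0 A j; lra.
rewrite eps_lt_k // addr0 nek_hE ltr_wpDl ?sumr_ge0 // => [l _|].
  by rewrite divr_ge0 ?mulr_ge0 ?nek_h_ge0.
have [l [Hl Al]] := row_lt_k Hjk.
by rewrite (bigD1 l) //= ltr_wpDr ?sumr_ge0 // normr_gt0.
Qed.

Lemma nek_p_term_ge0 j : 0 <= (A j j - nek_h A j - eps j) / A j j.
Proof. by have /andP[_ e_lt] := eps_bounds j; rewrite divr_ge0 ?ltW //; lra. Qed.

(* For i >= k, eps_i > w_i is a hypothesis; for i < k, eps_i = w_i = 0 and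
   p_i > 0 because row i has a nonzero entry right of the diagonal. *)
Lemma nek_margin_gt0 i : 0 < eps i - nek_w A eps i + nek_p A eps i.
Proof.
have p_ge0 : 0 <= nek_p A eps i.
  by rewrite sumr_ge0 // => j _; rewrite mulr_ge0 ?nek_p_term_ge0.
have [Hki | Hik] := leqP k i.
  have [_ _ w_lt] := eps_ge_k Hki.
  suff -> : nek_w A eps i
            = \sum_(j < n.+1 | (k <= j < i)%N) `|A i j| * eps j / A j j.
    by rewrite ltr_wpDr // subr_gt0.
  rewrite /nek_w big_mkcond [RHS]big_mkcond; apply: eq_bigr => j _ /=.
  case: (j < i)%N; rewrite ?andbT ?andbF //.
  have [_|Hjk] := leqP k j; first by rewrite mulrA.
  by rewrite eps_lt_k // mul0r mulr0.
have -> : nek_w A eps i = 0.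
  by rewrite /nek_w big1 // => j Hj; rewrite eps_lt_k ?mul0r ?mulr0 // (ltn_trans Hj).
rewrite eps_lt_k // subr0 add0r.
have [l [Hl Al]] := row_lt_k Hik.
rewrite /nek_p (bigD1 l) //= ltr_wpDr ?sumr_ge0 // => [j _|].
  by rewrite mulr_ge0 ?nek_p_term_ge0.
have /andP[_ e_lt] := eps_bounds l.
by rewrite mulr_gt0 ?normr_gt0 // divr_gt0 //; lra.
Qed.

End NekrasovScaling.

Lemma inv_min_le_max {R : realFieldType} (a b : R) :
  1 / Num.min a b <= Num.max (1 / a) (1 / b).
Proof. by rewrite minEle; case: ifP => _; rewrite le_max lexx ?orbT. Qed.

Theorem theorem5p2 (R : realFieldType) (n : nat) (A : 'M[R]_n.+1)
  (k : 'I_n.+1) (eps : 'I_n.+1 -> R) :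
  is_Nekrasov A ->
  (forall i : 'I_n.+1, 0 < A i i) ->
  (* k is the smallest index such that a_kj = 0 for all j > k *)
  (forall j : 'I_n.+1, (k < j)%N -> A k j = 0) ->
  (forall i : 'I_n.+1, (i < k)%N -> exists j : 'I_n.+1, (i < j)%N /\ A i j != 0) ->
  (forall i : 'I_n.+1, (i < k)%N -> eps i = 0) ->
  (forall i : 'I_n.+1, (k <= i)%N ->
     [/\ 0 < eps i, eps i < A i i - nek_h A i &
         \sum_(j < n.+1 | (k <= j < i)%N) `|A i j| * eps j / A j j < eps i]) ->
  let s := fun i : 'I_n.+1 => (nek_h A i + eps i) / A i i in
  let w := fun i : 'I_n.+1 =>
    \sum_(j < n.+1 | (j < i)%N) `|A i j| * (eps j / A j j) in
  let p := fun i : 'I_n.+1 =>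
    \sum_(j < n.+1 | (i < j)%N) `|A i j| * ((A j j - nek_h A j - eps j) / A j j) in
  forall d : 'rV[R]_n.+1,
    (forall i : 'I_n.+1, 0 <= d 0 i <= 1) ->
    norm_inf (invmx (1%:M - diag_mx d + diag_mx d *m A))
      <= Num.max (1 / min_ord (fun i => eps i - w i + p i))
                 (1 / min_ord s).
Proof.
(* only the minimality of k is used, not that row k vanishes right of the diagonal *)
move=> A_nek A_pos _ row_lt_k eps_lt_k eps_ge_k s w p d d01.
have s01 : forall i, 0 < s i <= 1 :=
  nek_s_bounds A_nek A_pos row_lt_k eps_lt_k eps_ge_k.
have margin_gt0 : forall i, 0 < eps i - w i + p i :=
  nek_margin_gt0 A_nek A_pos row_lt_k eps_lt_k eps_ge_k.
set m1 := min_ord _; set m2 := min_ord s; pose g := Num.min m1 m2.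
have g_gt0 : 0 < g.
  by rewrite lt_min !min_ord_gt0 // => i; case/andP: (s01 i).
have margin_ge i : g <= dominance_margin (1%:M - diag_mx d + diag_mx d *m A) s i.
  have /andP[d0 d1] := d01 i.
  rewrite dominance_margin_interpolate // dominance_margin_nek_s //.
  rewrite -[nek_w A eps i]/(w i) -[nek_p A eps i]/(p i).
  have g_le_s : g <= s i by rewrite ge_min (min_ord_le s) orbT.
  have g_le_m : g <= eps i - w i + p i by rewrite ge_min (min_ord_le (fun i => _)).
  have : (1 - d 0 i) * g <= (1 - d 0 i) * s i by rewrite ler_wpM2l // subr_ge0.
  have : d 0 i * g <= d 0 i * (eps i - w i + p i) by rewrite ler_wpM2l.
  lra.
apply: le_trans (inv_min_le_max m1 m2); rewrite div1r.
apply: norm_inf_le; first by rewrite invr_ge0 ltW.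
exact: sum_invmx_row_le s01 margin_ge g_gt0.
Qed.
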